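(* For all integers $s,l\ge 0$, as $n\to\infty$, \[ \left\langle S_{2,n}^l\left(S_{2,n}-\frac{n}{4}\right)^{2s}\right\rangle\sim\left(\frac{n}{4}\right)^l\frac{(2s-1)!!}{4^{2s}}n^s,\qquad \left\langle S_{2,n}^l\left(S_{2,n}-\frac{n}{4}\right)^{2s+1}\right\rangle\sim\left(\frac{n}{4}\right)^l\frac{(2s+1)!!}{2\cdot 4^{2s+1}}(2l+1)\,n^s. \]
   Context: For $n\ge 1$, let $\Omega_n$ be the set of rooted plane (ordered) full binary trees with $n$ leaves (every internal node has exactly two children, left and right distinguished). The random model is $\Omega_n$ with the uniform probability measure $P_n$; $\langle\cdot\rangle$ denotes expectation with respect to $P_n$. Horton–Strahler ordering: every leaf has order 1; an internal node whose two children have different orders $r_1\neq r_2$ has order $\max\{r_1,r_2\}$; an internal node whose two children both have order $r$ has order $r+1$. A branch of order $r$ is a maximal connected path consisting of nodes all of order $r$. $S_{2,n}(\tau)$ is the number of branches of order $2$ in $\tau\in\Omega_n$. For sequences, $a_n\sim b_n$ means $\lim_{n\to\infty}a_n/b_n=1$. Convention: $(-1)!!=1$. *)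

From Stdlib Require Import Reals Lra Lia Arith List PeanoNat.
Import ListNotations.
Open Scope R_scope.

Inductive tree : Type := Leaf : tree | Node : tree -> tree -> tree.

Fixpoint leaves (t : tree) : nat :=
  match t with Leaf => 1%nat | Node a b => (leaves a + leaves b)%nat end.

(* Enumeration of Omega_n (fuel-based; fuel n suffices). *)
Fixpoint trees_aux (fuel n : nat) : list tree :=
  match fuel with
  | O => []
  | S f =>
      if Nat.eqb n 1 then [Leaf]
      else flat_map (fun k =>
             flat_map (fun a => map (fun b => Node a b) (trees_aux f (n - k)))
                      (trees_aux f k))
           (seq 1 (n - 1))
  end.

Definition Omega (n : nat) : list tree := trees_aux n n.

Fixpoint hs (t : tree) : nat :=
  match t with
  | Leaf => 1%nat
  | Node a b =>
      if Nat.eqb (hs a) (hs b) then S (hs a) else Nat.max (hs a) (hs b)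
  end.

(* A branch of order r is a maximal connected set (a path) of order-r nodes;
   each branch is identified by its top node: a node of order r which is the
   root or whose parent has order different from r. *)
Definition b2n (b : bool) : nat := if b then 1%nat else 0%nat.

Fixpoint branch_tops (r : nat) (t : tree) : nat :=
  match t with
  | Leaf => 0%nat
  | Node a b =>
      (branch_tops r a + branch_tops r b
       + b2n (Nat.eqb (hs a) r && negb (Nat.eqb (hs t) r))
       + b2n (Nat.eqb (hs b) r && negb (Nat.eqb (hs t) r)))%nat
  end.

Definition S_r (r : nat) (t : tree) : nat :=
  (branch_tops r t + b2n (Nat.eqb (hs t) r))%nat.

Definition S2 (t : tree) : nat := S_r 2 t.

Definition expect (n : nat) (f : tree -> R) : R :=
  fold_right Rplus 0 (map f (Omega n)) / INR (length (Omega n)).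

(* Double factorial, with 0!! = 1!! = 1; (-1)!! = 1 is realised by
   writing (2s-1)!! as dfact (2*s - 1) with truncated subtraction. *)
Fixpoint dfact (n : nat) : nat :=
  match n with
  | O => 1%nat
  | S O => 1%nat
  | S (S m as k) => (n * dfact m)%nat
  end.

Definition asymp (a b : nat -> R) : Prop := Un_cv (fun n => a n / b n) 1.

Lemma leaves_pos t : (1 <= leaves t)%nat.
Proof. induction t; simpl; lia. Qed.

Lemma trees_aux_spec fuel : forall n t, (n <= fuel)%nat ->
  (In t (trees_aux fuel n) <-> leaves t = n).
Proof.
  induction fuel as [|f IH]; intros n t Hn.
  - simpl. split; [tauto|]. intros <-. pose proof (leaves_pos t). lia.
  - simpl. destruct (Nat.eqb_spec n 1) as [->|Hn1].
    + split.
      * intros [<-|[]]; reflexivity.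
      * destruct t as [|a b]; [now left|]. simpl; intros H.
        pose proof (leaves_pos a); pose proof (leaves_pos b); lia.
    + rewrite in_flat_map. split.
      * intros [k [Hk Ht]]. apply in_seq in Hk.
        rewrite in_flat_map in Ht. destruct Ht as [a [Ha Ht]].
        apply in_map_iff in Ht. destruct Ht as [b [<- Hb]].
        apply IH in Ha; [|lia]. apply IH in Hb; [|lia]. simpl; lia.
      * destruct t as [|a b]; simpl; intros H; [lia|].
        pose proof (leaves_pos a); pose proof (leaves_pos b).
        exists (leaves a). split; [apply in_seq; lia|].
        apply in_flat_map. exists a. split; [apply IH; lia|].
        apply in_map_iff. exists b. split; [reflexivity|]. apply IH; lia.
Qed.

Lemma Omega_spec n t : In t (Omega n) <-> leaves t = n.
Proof. apply trees_aux_spec; lia. Qed.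

Lemma NoDup_flat_map {A B : Type} (f : A -> list B) (l : list A) :
  (forall x y z, In x l -> In y l -> In z (f x) -> In z (f y) -> x = y) ->
  NoDup l -> (forall x, In x l -> NoDup (f x)) -> NoDup (flat_map f l).
Proof.
  induction l as [|x l IHl]; intros Hd Hl Hf; simpl; [constructor|].
  inversion Hl as [|? ? Hx Hl']; subst.
  apply NoDup_app.
  - apply Hf; now left.
  - apply IHl; [intros x0 y z Hx0 Hy; apply Hd; right; auto | exact Hl' | intros; apply Hf; right; auto].
  - intros z Hz Hz'. apply in_flat_map in Hz'. destruct Hz' as [y [Hy Hzy]].
    assert (x = y) by (eapply Hd; [left; reflexivity|right; exact Hy|exact Hz|exact Hzy]).
    subst; contradiction.
Qed.

Lemma trees_aux_NoDup fuel : forall n, NoDup (trees_aux fuel n).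
Proof.
  induction fuel as [|f IH]; intros n; simpl; [constructor|].
  destruct (Nat.eqb n 1); [repeat constructor; simpl; tauto|].
  apply NoDup_flat_map.
  - intros k1 k2 t Hk1 Hk2 H1 H2.
    apply in_flat_map in H1; destruct H1 as [a1 [Ha1 H1]].
    apply in_map_iff in H1; destruct H1 as [b1 [<- _]].
    apply in_flat_map in H2; destruct H2 as [a2 [Ha2 H2]].
    apply in_map_iff in H2; destruct H2 as [b2 [E _]].
    injection E as -> ->.
    (* a1 appears in trees_aux f k1 and trees_aux f k2: leaves determine k *)
    destruct f as [|f'].
    + destruct Ha1.
    + clear -Ha1 Ha2. revert Ha1 Ha2. generalize (S f') as g.
      intros g Ha1 Ha2.
      assert (Hl : forall m t, In t (trees_aux g m) -> leaves t = m).
      { clear. induction g as [|g IHg]; intros m t H; simpl in H; [destruct H|].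
        destruct (Nat.eqb_spec m 1) as [->|_]; [destruct H as [<-|[]]; reflexivity|].
        apply in_flat_map in H; destruct H as [k [Hk H]]. apply in_seq in Hk.
        apply in_flat_map in H; destruct H as [a [Ha H]].
        apply in_map_iff in H; destruct H as [b [<- Hb]].
        apply IHg in Ha; apply IHg in Hb; simpl; lia. }
      apply Hl in Ha1; apply Hl in Ha2; congruence.
  - apply seq_NoDup.
  - intros k _. apply NoDup_flat_map.
    + intros a1 a2 t _ _ H1 H2.
      apply in_map_iff in H1; destruct H1 as [b1 [<- _]].
      apply in_map_iff in H2; destruct H2 as [b2 [E _]].
      now injection E.
    + apply IH.
    + intros a _. apply NoDup_map_NoDup_ForallPairs; [|apply IH]. intros x y _ _ E; now injection E.

Qed.

Lemma Omega_NoDup n : NoDup (Omega n).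
Proof. apply trees_aux_NoDup. Qed.

(* S2 counts cherries (internal nodes whose two children are leaves).  Rémy's
   leaf insertion produces every tree with n + 1 leaves exactly n + 1 times
   from the trees with n leaves, and tracking the cherry count c through it
   gives a Stein-type identity
     E[4 c (c - 1) g(c - 1)] = E[(n - 2c) (n - 2c - 1) g(c)]   for every g.
   With g(c) = (c - n/4 + 1)^k this is a linear recursion for the central
   moments m_k = E[(S2 - n/4)^k]; its leading terms give by induction
   m_(2s) ~ (2s-1)!! (n/16)^s and m_(2s+1) ~ (2s+1)!!/8 (n/16)^s.  Finally
   S2^(l+1) X^k = (n/4) S2^l X^k + S2^l X^(k+1) for X = S2 - n/4 gives the
   mixed moments by induction on l. *)

From Stdlib Require Import Reals Lra Lia Arith List.
From Coquelicot Require Import Coquelicot.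
Import ListNotations.
Open Scope R_scope.

Fixpoint lsum {A : Type} (l : list A) (F : A -> R) : R :=
  match l with [] => 0 | x :: l' => F x + lsum l' F end.

Lemma fold_right_Rplus_map {A : Type} (l : list A) (F : A -> R) :
  fold_right Rplus 0 (map F l) = lsum l F.
Proof. induction l as [|x l IH]; simpl; [lra | now rewrite IH]. Qed.

Lemma lsum_app {A : Type} (l1 l2 : list A) F : lsum (l1 ++ l2) F = lsum l1 F + lsum l2 F.
Proof. induction l1 as [|x l IH]; simpl; [lra | rewrite IH; lra]. Qed.

Lemma lsum_map {A B : Type} (f : A -> B) l F : lsum (map f l) F = lsum l (fun x => F (f x)).
Proof. induction l as [|x l IH]; simpl; [lra | now rewrite IH]. Qed.

Lemma lsum_flat_map {A B : Type} (f : A -> list B) l F :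
  lsum (flat_map f l) F = lsum l (fun x => lsum (f x) F).
Proof. induction l as [|x l IH]; cbn [flat_map lsum]; [lra | now rewrite lsum_app, IH]. Qed.

Lemma lsum_ext {A : Type} (l : list A) F G :
  (forall x, In x l -> F x = G x) -> lsum l F = lsum l G.
Proof.
  induction l as [|x l IH]; simpl; intros H; [lra|].
  rewrite H, IH; auto.
Qed.

Lemma lsum_zero {A : Type} (l : list A) F : (forall x, In x l -> F x = 0) -> lsum l F = 0.
Proof.
  intros H. rewrite (lsum_ext l F (fun _ => 0)) by exact H.
  clear H; induction l as [|x l IH]; simpl; lra.
Qed.

Lemma lsum_plus {A : Type} (l : list A) F G : lsum l (fun x => F x + G x) = lsum l F + lsum l G.
Proof. induction l as [|x l IH]; simpl; [lra | rewrite IH; lra]. Qed.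

Lemma lsum_scal {A : Type} (l : list A) c F : lsum l (fun x => c * F x) = c * lsum l F.
Proof. induction l as [|x l IH]; simpl; [lra | rewrite IH; lra]. Qed.

Lemma lsum_one {A : Type} (l : list A) : lsum l (fun _ => 1) = INR (length l).
Proof.
  induction l as [|x l IH]; [reflexivity|].
  cbn [lsum length]. rewrite S_INR, IH; lra.
Qed.

Lemma lsum_swap {A B : Type} (l1 : list A) (l2 : list B) F :
  lsum l1 (fun x => lsum l2 (fun y => F x y)) = lsum l2 (fun y => lsum l1 (fun x => F x y)).
Proof.
  induction l1 as [|x l IH]; simpl.
  - symmetry. apply lsum_zero. intros; reflexivity.
  - now rewrite IH, <- lsum_plus.
Qed.

Lemma lsum_seq_S (start m : nat) F :
  lsum (seq start (S m)) F = lsum (seq start m) F + F (start + m)%nat.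
Proof. rewrite seq_S, lsum_app; simpl; lra. Qed.

Lemma lsum_seq_shift (start m : nat) F :
  lsum (seq (S start) m) F = lsum (seq start m) (fun k => F (S k)).
Proof. now rewrite <- seq_shift, lsum_map. Qed.

(** * Branches of order 2 are cherries *)

Definition is_cherry (a b : tree) : nat :=
  match a, b with Leaf, Leaf => 1%nat | _, _ => 0%nat end.

Fixpoint cherries (t : tree) : nat :=
  match t with Leaf => 0%nat | Node a b => (cherries a + cherries b + is_cherry a b)%nat end.

Lemma hs_pos t : (1 <= hs t)%nat.
Proof. induction t; simpl; [lia|]. destruct (hs t1 =? hs t2); lia. Qed.

Lemma is_cherry_hs a b : is_cherry a b = b2n ((hs a =? 1) && (hs b =? 1)).
Proof.
  assert (Hnode : forall x y, (hs (Node x y) =? 1) = false).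
  { intros x y; apply Nat.eqb_neq; simpl.
    pose proof (hs_pos x); pose proof (hs_pos y).
    destruct (Nat.eqb_spec (hs x) (hs y)); lia. }
  destruct a, b; rewrite ?Hnode; reflexivity.
Qed.

(* An order-2 branch ends at a node whose two children are leaves, and
   every such cherry is the bottom of exactly one order-2 branch. *)
Lemma S2_cherries t : S2 t = cherries t.
Proof.
  unfold S2, S_r.
  induction t as [|a IHa b IHb]; [reflexivity|]. cbn [branch_tops cherries].
  rewrite is_cherry_hs, <- IHa, <- IHb.
  change (hs (Node a b)) with (if hs a =? hs b then S (hs a) else Nat.max (hs a) (hs b)).
  pose proof (hs_pos a) as Hx; pose proof (hs_pos b) as Hy; clear IHa IHb.
  revert Hx Hy; generalize (hs a) (hs b); intros x y Hx Hy.
  destruct (Nat.eqb_spec x y) as [<-|Hxy];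
  repeat match goal with |- context [?u =? ?v] => destruct (Nat.eqb_spec u v) end;
  simpl; lia.
Qed.

Lemma flat_map_ext_in {A B : Type} (f g : A -> list B) l :
  (forall x, In x l -> f x = g x) -> flat_map f l = flat_map g l.
Proof. induction l as [|x l IH]; simpl; intros H; [reflexivity|]. rewrite H, IH; auto. Qed.

Lemma trees_aux_S f m : trees_aux (S f) m =
  if m =? 1 then [Leaf]
  else flat_map (fun k => flat_map (fun a => map (fun b => Node a b) (trees_aux f (m - k)))
                                   (trees_aux f k))
                (seq 1 (m - 1)).
Proof. reflexivity. Qed.

Lemma trees_aux_fuel_S f m : (m <= f)%nat -> trees_aux (S f) m = trees_aux f m.
Proof.
  revert m; induction f as [|f IH]; intros m Hm.
  - now replace m with 0%nat by lia.
  - rewrite (trees_aux_S (S f)), (trees_aux_S f).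
    destruct (m =? 1); [reflexivity|].
    apply flat_map_ext_in; intros k Hk; apply in_seq in Hk.
    rewrite (IH k), (IH (m - k)%nat) by lia. reflexivity.
Qed.

Lemma trees_aux_Omega f m : (m <= f)%nat -> trees_aux f m = Omega m.
Proof.
  intros H; induction H as [|f Hmf IH]; [reflexivity|].
  now rewrite trees_aux_fuel_S.
Qed.

Lemma lsum_Omega_S n F : (1 <= n)%nat ->
  lsum (Omega (S n)) F =
  lsum (seq 1 n) (fun k =>
    lsum (Omega k) (fun a => lsum (Omega (S n - k)) (fun b => F (Node a b)))).
Proof.
  intros Hn. unfold Omega at 1. rewrite trees_aux_S.
  replace (S n =? 1) with false by (symmetry; apply Nat.eqb_neq; lia).
  replace (S n - 1)%nat with n by lia.
  rewrite lsum_flat_map. apply lsum_ext; intros k Hk; apply in_seq in Hk.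
  rewrite lsum_flat_map, !trees_aux_Omega by lia.
  apply lsum_ext; intros a _. apply lsum_map.
Qed.

Lemma lsum_Omega_ext n F G :
  (forall t, leaves t = n -> F t = G t) -> lsum (Omega n) F = lsum (Omega n) G.
Proof. intros H; apply lsum_ext; intros t Ht; apply H, Omega_spec, Ht. Qed.

(** * Rémy's insertion and the Stein identity for cherries *)

(* [insertions t] grafts a new leaf on the left or on the right of every edge
   of [t] (including a virtual edge above the root), so it has [4 n - 2]
   elements; removing a leaf inverts it, whence each tree with [n + 1] leaves
   arises [n + 1] times. *)
Fixpoint insertions (t : tree) : list tree :=
  Node t Leaf :: Node Leaf t ::
  match t with
  | Leaf => []
  | Node a b => map (fun a' => Node a' b) (insertions a) ++ map (fun b' => Node a b') (insertions b)
  end.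

Lemma lsum_insertions_Node a b F : lsum (insertions (Node a b)) F =
  F (Node (Node a b) Leaf) + F (Node Leaf (Node a b))
  + lsum (insertions a) (fun a' => F (Node a' b)) + lsum (insertions b) (fun b' => F (Node a b')).
Proof. cbn [insertions lsum]. rewrite lsum_app, !lsum_map. lra. Qed.

Lemma lsum_seq_weighted m (G : nat -> R) :
  INR (S (S m)) * lsum (seq 1 (S m)) G =
  G 1%nat + G (S m) + lsum (seq 1 m) (fun k => INR (S k) * G (S k) + INR (S (S m) - k) * G k).
Proof.
  rewrite <- lsum_scal.
  rewrite (lsum_ext _ _ (fun k => INR k * G k + INR (S (S m) - k) * G k)).
  2:{ intros k Hk; apply in_seq in Hk.
      rewrite <- Rmult_plus_distr_r, <- plus_INR. do 2 f_equal. lia. }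
  rewrite lsum_plus, lsum_plus.
  change (seq 1 (S m)) with (1%nat :: seq 2 m) at 1.
  rewrite lsum_seq_S. cbn [lsum]. rewrite (lsum_seq_shift 1 m).
  replace (S (S m) - (1 + m))%nat with 1%nat by lia.
  replace (1 + m)%nat with (S m) by lia. simpl (INR 1). lra.
Qed.

Lemma lsum_insertions_decompose n F : (1 <= n)%nat ->
  lsum (Omega (S n)) (fun t => lsum (insertions t) F) =
  lsum (Omega (S n)) (fun t => F (Node t Leaf)) + lsum (Omega (S n)) (fun t => F (Node Leaf t))
  + lsum (seq 1 n) (fun k => lsum (Omega k) (fun a => lsum (Omega (S n - k)) (fun b =>
      lsum (insertions a) (fun a' => F (Node a' b))
      + lsum (insertions b) (fun b' => F (Node a b'))))).
Proof.
  intros Hn. rewrite !(lsum_Omega_S n) by exact Hn. rewrite <- !lsum_plus.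
  apply lsum_ext; intros k _. rewrite <- !lsum_plus.
  apply lsum_ext; intros a _. rewrite <- !lsum_plus.
  apply lsum_ext; intros b _. rewrite lsum_insertions_Node. lra.
Qed.

Lemma lsum_insertions n F : (1 <= n)%nat ->
  lsum (Omega n) (fun t => lsum (insertions t) F) = INR (S n) * lsum (Omega (S n)) F.
Proof.
  revert F; induction n as [n IH] using lt_wf_ind; intros F Hn.
  destruct n as [|[|m]]; [lia | cbn; lra |].
  rewrite lsum_insertions_decompose, (lsum_Omega_S (S (S m))) by lia.
  set (G := fun k =>
    lsum (Omega k) (fun a => lsum (Omega (S (S (S m)) - k)) (fun b => F (Node a b)))).
  rewrite lsum_seq_weighted.
  assert (HG1 : G 1%nat = lsum (Omega (S (S m))) (fun t => F (Node Leaf t))).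
  { unfold G; simpl (_ - 1)%nat. change (Omega 1) with [Leaf]. cbn [lsum]. lra. }
  assert (HGN : G (S (S m)) = lsum (Omega (S (S m))) (fun t => F (Node t Leaf))).
  { unfold G; replace (S (S (S m)) - S (S m))%nat with 1%nat by lia.
    apply lsum_ext; intros a _. change (Omega 1) with [Leaf]. cbn [lsum]. lra. }
  rewrite HG1, HGN,
    (lsum_ext (seq 1 (S m)) _ (fun k => INR (S k) * G (S k) + INR (S (S (S m)) - k) * G k));
    [lra|].
  intros k Hk; apply in_seq in Hk. rewrite (lsum_ext (Omega k) _ (fun a =>
    lsum (Omega (S (S m) - k)) (fun b => lsum (insertions a) (fun a' => F (Node a' b)))
    + lsum (Omega (S (S m) - k)) (fun b => lsum (insertions b) (fun b' => F (Node a b')))))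
    by (intros; apply lsum_plus).
  rewrite lsum_plus. unfold G. f_equal.
  - replace (S (S (S m)) - S k)%nat with (S (S m) - k)%nat by lia.
    rewrite lsum_swap, (lsum_swap (Omega (S k))), <- lsum_scal.
    apply lsum_ext; intros b _. apply (IH k); lia.
  - rewrite <- lsum_scal. apply lsum_ext; intros a _.
    replace (S (S (S m)) - k)%nat with (S (S (S m) - k)) by lia.
    apply (IH (S (S m) - k)%nat); lia.
Qed.

Lemma in_insertions_Node t u : In u (insertions t) -> exists x y, u = Node x y.
Proof.
  destruct t as [|a b]; cbn [insertions In]; intros [<-|[<-|Hu]]; eauto; [destruct Hu|].
  apply in_app_or in Hu.
  destruct Hu as [Hu|Hu]; apply in_map_iff in Hu; destruct Hu as (x & <- & _); eauto.
Qed.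

Lemma is_cherry_cases a b : is_cherry a b = 0%nat \/ (a = Leaf /\ b = Leaf).
Proof. destruct a, b; simpl; auto. Qed.

(* A new leaf creates a cherry exactly when it is grafted next to one of the
   [n - 2 c] leaves that do not already belong to a cherry. *)
Lemma lsum_insertions_cherries t : forall f : nat -> R,
  lsum (insertions t) (fun u => f (cherries u)) =
  2 * (INR (leaves t) - 2 * INR (cherries t)) * f (S (cherries t))
  + 2 * (INR (leaves t) + 2 * INR (cherries t) - 1) * f (cherries t).
Proof.
  induction t as [|a IHa b IHb]; intros f; [cbn; lra|].
  destruct (is_cherry_cases a b) as [Hab|[-> ->]]; [|cbn; lra].
  rewrite lsum_insertions_Node.
  rewrite (lsum_ext (insertions a) _ (fun a' => (fun c => f (c + cherries b)%nat) (cherries a'))).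
  2:{ intros u Hu; destruct (in_insertions_Node a u Hu) as (x & y & ->).
      cbn [cherries is_cherry]. f_equal; lia. }
  rewrite (lsum_ext (insertions b) _ (fun b' => (fun c => f (cherries a + c)%nat) (cherries b'))).
  2:{ intros u Hu; destruct (in_insertions_Node b u Hu) as (x & y & ->).
      cbn [cherries]. replace (is_cherry a (Node x y)) with 0%nat by (destruct a; reflexivity).
      f_equal; lia. }
  rewrite (IHa (fun c => f (c + cherries b)%nat)), (IHb (fun c => f (cherries a + c)%nat)).
  cbn [cherries leaves is_cherry]. rewrite Hab.
  rewrite !Nat.add_0_r, Nat.add_0_l, Nat.add_succ_l, Nat.add_succ_r, !plus_INR. lra.
Qed.

(* At [c = 0] the truncated [c - 1] is harmless: its factor [INR c] vanishes. *)
Definition stein_operator (n : nat) (g : nat -> R) (c : nat) : R :=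
  4 * INR c * (INR c - 1) * g (c - 1)%nat
  - (INR n - 2 * INR c) * (INR n - 2 * INR c - 1) * g c.

Lemma stein_operator_insertions n g c :
  2 * (INR n - 2 * INR c) * stein_operator (S n) g (S c)
  + 2 * (INR n + 2 * INR c - 1) * stein_operator (S n) g c
  = stein_operator n
      (fun c => 2 * (INR n + 2 * INR c + 1) * g c + 2 * (INR n - 2 * INR c - 2) * g (S c)) c.
Proof.
  unfold stein_operator. destruct c as [|c]; simpl (S _ - 1)%nat; rewrite ?Nat.sub_0_r, !S_INR;
  simpl (INR 0); ring.
Qed.

Lemma stein_identity n g : lsum (Omega n) (fun t => stein_operator n g (cherries t)) = 0.
Proof.
  revert g; induction n as [|n IH]; intros g; [reflexivity|].
  destruct (Nat.eq_dec n 0) as [->|Hn]; [cbn; unfold stein_operator; simpl; lra|].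
  apply (Rmult_eq_reg_l (INR (S n))); [|apply not_0_INR; lia].
  rewrite Rmult_0_r, <- lsum_insertions by lia.
  erewrite lsum_Omega_ext; [apply IH|].
  intros t Ht. rewrite lsum_insertions_cherries, Ht. apply stein_operator_insertions.
Qed.

(** * Expectations and the central moment recursion *)

Lemma expect_lsum n f : expect n f = lsum (Omega n) f / INR (length (Omega n)).
Proof. unfold expect; now rewrite fold_right_Rplus_map. Qed.

Lemma expect_plus n f g : expect n (fun t => f t + g t) = expect n f + expect n g.
Proof. rewrite !expect_lsum, lsum_plus. lra. Qed.

Lemma expect_scal n c f : expect n (fun t => c * f t) = c * expect n f.
Proof. rewrite !expect_lsum, lsum_scal. unfold Rdiv; ring. Qed.

Lemma expect_minus n f g : expect n (fun t => f t - g t) = expect n f - expect n g.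
Proof.
  rewrite !expect_lsum, (lsum_ext _ _ (fun t => f t + -1 * g t)) by (intros; ring).
  rewrite lsum_plus, lsum_scal. lra.
Qed.

Lemma expect_ext n f g : (forall t, leaves t = n -> f t = g t) -> expect n f = expect n g.
Proof. intros H. rewrite !expect_lsum, (lsum_Omega_ext n f g H). reflexivity. Qed.

Lemma expect_sum {A : Type} n (l : list A) F :
  expect n (fun t => lsum l (fun i => F i t)) = lsum l (fun i => expect n (F i)).
Proof.
  rewrite expect_lsum, lsum_swap. unfold Rdiv. rewrite Rmult_comm, <- lsum_scal.
  apply lsum_ext; intros i _. rewrite expect_lsum. apply Rmult_comm.
Qed.

Fixpoint caterpillar (k : nat) : tree :=
  match k with O => Leaf | S k' => Node (caterpillar k') Leaf end.

Lemma leaves_caterpillar k : leaves (caterpillar k) = S k.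
Proof. induction k; simpl; lia. Qed.

Lemma expect_one n : (1 <= n)%nat -> expect n (fun _ => 1) = 1.
Proof.
  intros Hn. rewrite expect_lsum, lsum_one. apply Rdiv_diag, not_0_INR.
  assert (Hin : In (caterpillar (n - 1)) (Omega n))
    by (apply Omega_spec; rewrite leaves_caterpillar; lia).
  destruct (Omega n); [destruct Hin | discriminate].
Qed.

Definition central_moment (n j : nat) : R :=
  expect n (fun t => (INR (S2 t) - INR n / 4) ^ j).

Lemma sum_f_R0_lsum f k : sum_f_R0 f k = lsum (seq 0 (S k)) f.
Proof. induction k as [|k IH]; [simpl; lra|]. now rewrite lsum_seq_S, <- IH. Qed.

Lemma binomial_add_1 x k : (x + 1) ^ k = lsum (seq 0 (S k)) (fun i => Binomial.C k i * x ^ i).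
Proof.
  rewrite binomial, sum_f_R0_lsum. apply lsum_ext; intros i _. rewrite pow1. ring.
Qed.

Lemma C_n_n k : Binomial.C k k = 1.
Proof.
  unfold Binomial.C. rewrite Nat.sub_diag. simpl (INR (fact 0)).
  pose proof (INR_fact_neq_0 k). field. auto.
Qed.

Lemma C_Sn_n k : Binomial.C (S k) k = INR (S k).
Proof.
  unfold Binomial.C. replace (S k - k)%nat with 1%nat by lia.
  change (fact (S k)) with (S k * fact k)%nat. rewrite mult_INR. simpl (INR (fact 1)).
  pose proof (INR_fact_neq_0 k). field. auto.
Qed.

Lemma C_SSn_n k : Binomial.C (S (S k)) k = INR (S (S k)) * INR (S k) / 2.
Proof.
  unfold Binomial.C. replace (S (S k) - k)%nat with 2%nat by lia.
  change (fact (S (S k))) with (S (S k) * (S k * fact k))%nat. rewrite !mult_INR.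
  simpl (INR (fact 2)). pose proof (INR_fact_neq_0 k). field. auto.
Qed.

(* Stein's identity for [g c = (c - n/4 + 1)^k], written in the centred
   variable [X = S2 - n/4]. *)
Lemma stein_centered n k : let a := INR n / 4 in
  expect n (fun t => let X := INR (S2 t) - a in
                     (4 * X ^ 2 + 4 * (2 * a - 1) * X + 4 * (a * a - a)) * X ^ k)
  = expect n (fun t => let X := INR (S2 t) - a in
                       (4 * a * a - 2 * a - (8 * a - 2) * X + 4 * X ^ 2) * (X + 1) ^ k).
Proof.
  intros a. apply Rminus_diag_uniq.
  assert (Hstein :
    expect n (fun t => stein_operator n (fun c => (INR c - a + 1) ^ k) (cherries t)) = 0)
    by (rewrite expect_lsum, stein_identity; apply Rdiv_0_l).
  rewrite <- expect_minus, <- Hstein.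
  apply expect_ext; intros t _. rewrite <- S2_cherries. unfold stein_operator.
  replace (INR n) with (4 * a) by (unfold a; field).
  destruct (S2 t) as [|c]; [simpl; ring|].
  simpl (S c - 1)%nat. rewrite Nat.sub_0_r, S_INR.
  replace (INR c - a + 1) with (INR c + 1 - a) by ring. ring.
Qed.

Lemma central_moment_balance n k : let m := central_moment n in
  4 * m (S (S k)) + (2 * INR n - 4) * m (S k) + (INR n ^ 2 / 4 - INR n) * m k
  = lsum (seq 0 (S k)) (fun i => Binomial.C k i *
      ((INR n ^ 2 / 4 - INR n / 2) * m i - ((2 * INR n - 2) * m (S i) - 4 * m (S (S i))))).
Proof.
  intros m. pose proof (stein_centered n k) as H. cbv zeta in H.
  set (a := INR n / 4) in H. symmetry in H.
  rewrite (expect_ext n _ (fun t => lsum (seq 0 (S k)) (fun i => Binomial.C k i *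
      ((4 * a * a - 2 * a) * (INR (S2 t) - a) ^ i
       - ((8 * a - 2) * (INR (S2 t) - a) ^ S i - 4 * (INR (S2 t) - a) ^ S (S i)))))),
    expect_sum in H.
  2:{ intros t _. rewrite binomial_add_1, <- lsum_scal.
      apply lsum_ext; intros i _. simpl. ring. }
  symmetry in H.
  rewrite (expect_ext n _ (fun t => 4 * (INR (S2 t) - a) ^ S (S k)
      + 4 * (2 * a - 1) * (INR (S2 t) - a) ^ S k + 4 * (a * a - a) * (INR (S2 t) - a) ^ k)),
    !expect_plus, !expect_scal in H by (intros; simpl; ring).
  rewrite (lsum_ext _ _ (fun i => Binomial.C k i *
      ((INR n ^ 2 / 4 - INR n / 2) * m i - ((2 * INR n - 2) * m (S i) - 4 * m (S (S i)))))) in H.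
  2:{ intros i _. unfold m, central_moment. fold a.
      rewrite expect_scal, expect_minus, expect_scal, expect_minus, !expect_scal.
      unfold a; field. }
  rewrite <- H. unfold m, central_moment. fold a. unfold a; field.
Qed.

Lemma central_moment_rec n k :
  (4 * INR n - 6 - 4 * INR k) * central_moment n (S k) =
  (INR n / 2 - (2 * INR n - 2) * INR k) * central_moment n k
  + (INR n ^ 2 / 4 - INR n / 2) * lsum (seq 0 k) (fun i => Binomial.C k i * central_moment n i)
  - lsum (seq 0 (k - 1)) (fun i => Binomial.C k i *
      ((2 * INR n - 2) * central_moment n (S i) - 4 * central_moment n (S (S i)))).
Proof.
  pose proof (central_moment_balance n k) as Hbal. cbv zeta in Hbal.
  set (m := central_moment n) in *.
  set (c := INR n ^ 2 / 4 - INR n / 2) in *.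
  set (B := fun i => (2 * INR n - 2) * m (S i) - 4 * m (S (S i))).
  fold (B k) in Hbal.
  destruct k as [|k].
  - simpl (0 - 1)%nat. cbn [seq lsum] in *. rewrite C_n_n in Hbal.
    unfold c in *. simpl (INR 0). lra.
  - rewrite !lsum_seq_S in Hbal. rewrite lsum_seq_S. rewrite Nat.sub_succ, Nat.sub_0_r.
    rewrite (lsum_ext (seq 0 k) _
      (fun i => c * (Binomial.C (S k) i * m i) + -1 * (Binomial.C (S k) i * B i))) in Hbal
      by (intros; unfold B; ring).
    rewrite lsum_plus, !lsum_scal, C_n_n, C_Sn_n in Hbal. rewrite C_Sn_n.
    unfold B, c in *. rewrite !S_INR in *. simpl (0 + _)%nat in *. lra.
Qed.

(** * Asymptotics of the central moments *)

Lemma is_lim_seq_inv_INR : is_lim_seq (fun n => / INR n) 0.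
Proof. apply (is_lim_seq_inv _ _ is_lim_seq_INR). discriminate. Qed.

Lemma is_lim_seq_const_plus_div c d : is_lim_seq (fun n => c + d / INR n) c.
Proof.
  assert (H : is_lim_seq (fun n => c + d * / INR n) (c + d * 0)).
  { apply is_lim_seq_plus'; [apply is_lim_seq_const|].
    apply is_lim_seq_mult'; [apply is_lim_seq_const | apply is_lim_seq_inv_INR]. }
  now rewrite Rmult_0_r, Rplus_0_r in H.
Qed.

Lemma is_lim_seq_lsum {A : Type} (l : list A) (f : A -> nat -> R) (L : A -> R) :
  (forall x, In x l -> is_lim_seq (f x) (L x)) ->
  is_lim_seq (fun n => lsum l (fun x => f x n)) (lsum l L).
Proof.
  induction l as [|x l IH]; intros H; simpl; [apply is_lim_seq_const|].
  apply is_lim_seq_plus'; [apply H; now left | apply IH; intros; apply H; now right].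
Qed.

Lemma is_lim_seq_div_pow_le (x : nat -> R) (L : R) (d e : nat) :
  is_lim_seq (fun n => x n / INR n ^ d) L -> (d <= e)%nat ->
  is_lim_seq (fun n => x n / INR n ^ e) ((if (e =? d)%nat then L else 0) : R).
Proof.
  intros Hx Hde. destruct (Nat.eqb_spec e d) as [->|Hne]; [exact Hx|].
  assert (Hpow : forall p, is_lim_seq (fun n => (/ INR n) ^ S p) 0).
  { induction p as [|p IH].
    - apply (is_lim_seq_ext (fun n => / INR n)); [intros; ring | apply is_lim_seq_inv_INR].
    - assert (H := is_lim_seq_mult' _ _ _ _ is_lim_seq_inv_INR IH).
      now rewrite Rmult_0_l in H. }
  apply (is_lim_seq_ext_loc (fun n => x n / INR n ^ d * (/ INR n) ^ S (e - S d))).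
  - exists 1%nat; intros n Hn. assert (INR n <> 0) by (apply not_0_INR; lia).
    replace e with (d + S (e - S d))%nat at 2 by lia.
    rewrite pow_add, pow_inv. field. split; apply pow_nonzero; auto.
  - assert (H := is_lim_seq_mult' _ _ _ _ Hx (Hpow (e - S d)%nat)).
    now rewrite Rmult_0_r in H.
Qed.

Lemma div2_bounds n : (2 * Nat.div2 n <= n <= 2 * Nat.div2 n + 1)%nat.
Proof. pose proof (Nat.div2_odd n). destruct (Nat.odd n); simpl in *; lia. Qed.

(* The recursion divided by [n ^ (r + 1)]: every term becomes a coefficient
   with a finite limit times a moment normalised by at least its own order. *)
Lemma central_moment_step n k : (S (S k) <= n)%nat ->
  let r := Nat.div2 (S k) in
  central_moment n (S k) / INR n ^ r =
  / (4 + (- 6 - 4 * INR k) / INR n) *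
  ((1/2 - 2 * INR k + 2 * INR k / INR n) * (central_moment n k / INR n ^ r)
   + (1/4 + (-1/2) / INR n) *
       lsum (seq 0 k) (fun i => Binomial.C k i * (central_moment n i / INR n ^ (r - 1)))
   - lsum (seq 0 (k - 1)) (fun i => Binomial.C k i *
       ((2 + -2 / INR n) * (central_moment n (S i) / INR n ^ r)
        - (0 + 4 / INR n) * (central_moment n (S (S i)) / INR n ^ r)))).
Proof.
  intros Hn r. set (m := central_moment n).
  assert (Hn0 : INR n <> 0) by (apply not_0_INR; lia).
  assert (HD : 4 * INR n - 6 - 4 * INR k > 0).
  { apply le_INR in Hn. rewrite !S_INR in Hn. lra. }
  assert (Hr : INR n ^ r <> 0) by (apply pow_nonzero, Hn0).
  assert (HA : lsum (seq 0 k) (fun i => Binomial.C k i * (m i / INR n ^ (r - 1)))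
               = INR n ^ 2 / INR n ^ S r * lsum (seq 0 k) (fun i => Binomial.C k i * m i)).
  { destruct k as [|k]; [simpl; ring|].
    rewrite <- lsum_scal. apply lsum_ext; intros i _.
    replace (S r) with (r - 1 + 2)%nat by (pose proof (div2_bounds (S (S k))); unfold r; lia).
    rewrite pow_add. field; repeat split; try apply pow_nonzero; exact Hn0. }
  assert (HB : lsum (seq 0 (k - 1)) (fun i => Binomial.C k i *
                 ((2 + -2 / INR n) * (m (S i) / INR n ^ r)
                  - (0 + 4 / INR n) * (m (S (S i)) / INR n ^ r)))
               = / INR n ^ S r * lsum (seq 0 (k - 1)) (fun i => Binomial.C k i *
                 ((2 * INR n - 2) * m (S i) - 4 * m (S (S i))))).
  { rewrite <- lsum_scal. apply lsum_ext; intros i _. simpl.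
    field; repeat split; try apply pow_nonzero; exact Hn0. }
  rewrite HA, HB.
  replace (m (S k)) with (/ (4 * INR n - 6 - 4 * INR k) * ((4 * INR n - 6 - 4 * INR k) * m (S k)))
    by (field; lra).
  unfold m; rewrite central_moment_rec; fold m. simpl pow.
  field. repeat split; auto. lra.
Qed.

(* [(2s-1)!!/16^s] is the [2s]-th moment of a centred normal law of variance
   [1/16], the limiting variance of [S2 / sqrt n]. *)
Definition moment_limit (j : nat) : R :=
  if Nat.even j then INR (dfact (j - 1)) / 16 ^ Nat.div2 j
  else INR (dfact j) / (8 * 16 ^ Nat.div2 j).

(* The limit of [central_moment n j / INR n ^ e] for [e >= Nat.div2 j]. *)
Definition rescaled_limit (e j : nat) : R :=
  if (e =? Nat.div2 j)%nat then moment_limit j else 0.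

Lemma central_moment_limit_step k :
  (forall i, (i <= k)%nat ->
     is_lim_seq (fun n => central_moment n i / INR n ^ Nat.div2 i) (moment_limit i)) ->
  let r := Nat.div2 (S k) in
  is_lim_seq (fun n => central_moment n (S k) / INR n ^ r)
    (/ 4 * ((1/2 - 2 * INR k) * rescaled_limit r k
            + 1/4 * lsum (seq 0 k) (fun i => Binomial.C k i * rescaled_limit (r - 1) i)
            - lsum (seq 0 (k - 1)) (fun i => Binomial.C k i *
                (2 * rescaled_limit r (S i) - 0 * rescaled_limit r (S (S i)))))).
Proof.
  intros IH r.
  assert (Hres : forall i e, (i <= k)%nat -> (Nat.div2 i <= e)%nat ->
            is_lim_seq (fun n => central_moment n i / INR n ^ e) (rescaled_limit e i)).
  { intros i e Hi He. apply is_lim_seq_div_pow_le; auto. }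
  assert (Hscal : forall c (x : nat -> R) (L : R),
            is_lim_seq x L -> is_lim_seq (fun n => c * x n) (c * L))
    by (intros; apply is_lim_seq_mult'; [apply is_lim_seq_const | assumption]).
  pose proof (div2_bounds k); pose proof (div2_bounds (S k)) as Hr; fold r in Hr.
  eapply is_lim_seq_ext_loc.
  { exists (S (S k)); intros n Hn. symmetry. apply (central_moment_step n k Hn). }
  apply is_lim_seq_mult'.
  { apply (is_lim_seq_inv _ _ (is_lim_seq_const_plus_div 4 (-6 - 4 * INR k))).
    intros Heq; injection Heq; lra. }
  apply is_lim_seq_minus'; [apply is_lim_seq_plus'|].
  - apply is_lim_seq_mult'; [apply is_lim_seq_const_plus_div | apply Hres; lia].
  - apply is_lim_seq_mult'; [apply is_lim_seq_const_plus_div|].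
    apply is_lim_seq_lsum; intros i Hi; apply in_seq in Hi.
    apply Hscal, Hres; pose proof (div2_bounds i); lia.
  - apply is_lim_seq_lsum; intros i Hi; apply in_seq in Hi.
    pose proof (div2_bounds (S i)); pose proof (div2_bounds (S (S i))).
    apply Hscal, is_lim_seq_minus'; apply is_lim_seq_mult';
      try apply is_lim_seq_const_plus_div; apply Hres; lia.
Qed.

Lemma moment_limit_double s : moment_limit (2 * s) = INR (dfact (2 * s - 1)) / 16 ^ s.
Proof. unfold moment_limit. now rewrite Nat.even_mul, Nat.div2_double. Qed.

Lemma moment_limit_succ_double s :
  moment_limit (S (2 * s)) = INR (dfact (S (2 * s))) / (8 * 16 ^ s).
Proof.
  unfold moment_limit. rewrite Nat.even_succ, Nat.odd_mul, Nat.div2_succ_double. reflexivity.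
Qed.

Lemma dfact_succ_double s : dfact (S (2 * s)) = (S (2 * s) * dfact (2 * s - 1))%nat.
Proof.
  destruct s as [|s]; [reflexivity|].
  replace (2 * S s - 1)%nat with (S (2 * s)) by lia.
  replace (S (2 * S s)) with (S (S (S (2 * s)))) by lia. reflexivity.
Qed.

Lemma rescaled_limit_eq e j : e = Nat.div2 j -> rescaled_limit e j = moment_limit j.
Proof. intros ->. unfold rescaled_limit. now rewrite Nat.eqb_refl. Qed.

Lemma rescaled_limit_neq e j : e <> Nat.div2 j -> rescaled_limit e j = 0.
Proof. intros H. unfold rescaled_limit. now rewrite (proj2 (Nat.eqb_neq _ _) H). Qed.

Lemma moment_limit_S k : let r := Nat.div2 (S k) in
  / 4 * ((1/2 - 2 * INR k) * rescaled_limit r k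
         + 1/4 * lsum (seq 0 k) (fun i => Binomial.C k i * rescaled_limit (r - 1) i)
         - lsum (seq 0 (k - 1)) (fun i => Binomial.C k i *
             (2 * rescaled_limit r (S i) - 0 * rescaled_limit r (S (S i)))))
  = moment_limit (S k).
Proof.
  intros r. pose proof (div2_bounds (S k)) as Hr; fold r in Hr.
  rewrite (lsum_zero (seq 0 (k - 1))), Rminus_0_r.
  2:{ intros i Hi; apply in_seq in Hi. pose proof (div2_bounds (S i)).
      rewrite rescaled_limit_neq by lia. ring. }
  destruct (Nat.Even_or_Odd k) as [[s ->]|[s ->]].
  - unfold r. rewrite Nat.div2_succ_double, rescaled_limit_eq by (now rewrite Nat.div2_double).
    destruct s as [|s]; [cbn; lra|].
    replace (2 * S s)%nat with (S (S (2 * s))) by lia. rewrite !lsum_seq_S.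
    rewrite lsum_zero by (intros i Hi; apply in_seq in Hi; pose proof (div2_bounds i);
                          rewrite rescaled_limit_neq by lia; ring).
    rewrite !Nat.add_0_l. replace (S s - 1)%nat with s by lia.
    rewrite (rescaled_limit_eq s (2 * s)) by (symmetry; apply Nat.div2_double).
    rewrite (rescaled_limit_eq s (S (2 * s))) by (symmetry; apply Nat.div2_succ_double).
    rewrite C_SSn_n, C_Sn_n.
    replace (S (S (2 * s))) with (2 * S s)%nat by lia.
    rewrite !moment_limit_succ_double, !moment_limit_double, !dfact_succ_double.
    replace (2 * S s - 1)%nat with (S (2 * s)) by lia.
    rewrite dfact_succ_double. repeat rewrite ?mult_INR, ?S_INR. simpl (INR 0). simpl pow.
    field. apply pow_nonzero; lra.
  - unfold r. replace (2 * s + 1)%nat with (S (2 * s)) by lia.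
    replace (S (S (2 * s))) with (2 * S s)%nat by lia.
    rewrite Nat.div2_double, (rescaled_limit_neq (S s) (S (2 * s)))
      by (rewrite Nat.div2_succ_double; lia).
    replace (S s - 1)%nat with s by lia.
    rewrite lsum_seq_S, lsum_zero by (intros i Hi; apply in_seq in Hi; pose proof (div2_bounds i);
                                     rewrite rescaled_limit_neq by lia; ring).
    rewrite Nat.add_0_l, (rescaled_limit_eq s (2 * s)) by (symmetry; apply Nat.div2_double).
    rewrite C_Sn_n, moment_limit_double, moment_limit_double.
    replace (2 * S s - 1)%nat with (S (2 * s)) by lia.
    rewrite dfact_succ_double. repeat rewrite ?mult_INR, ?S_INR. simpl (INR 0). simpl pow.
    field. apply pow_nonzero; lra.
Qed.

Lemma central_moment_limit j :
  is_lim_seq (fun n => central_moment n j / INR n ^ Nat.div2 j) (moment_limit j).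
Proof.
  induction j as [j IH] using lt_wf_ind.
  destruct j as [|k].
  - replace (moment_limit 0) with 1 by (cbn; lra).
    apply (is_lim_seq_ext_loc (fun _ => 1)); [|apply is_lim_seq_const].
    exists 1%nat; intros n Hn. unfold central_moment. simpl. rewrite expect_one by lia. field.
  - rewrite <- moment_limit_S. apply central_moment_limit_step.
    intros i Hi. apply IH. lia.
Qed.

(** * Mixed moments *)

Definition mixed_moment (l k n : nat) : R :=
  expect n (fun t => INR (S2 t) ^ l * (INR (S2 t) - INR n / 4) ^ k).

Lemma mixed_moment_S l k n :
  mixed_moment (S l) k n = INR n / 4 * mixed_moment l k n + mixed_moment l (S k) n.
Proof.
  unfold mixed_moment. rewrite <- expect_scal, <- expect_plus.
  apply expect_ext; intros t _. simpl. ring.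
Qed.

Lemma mixed_moment_O k n : mixed_moment 0 k n = central_moment n k.
Proof. apply expect_ext; intros t _. ring. Qed.

Lemma mixed_moment_S_limit_lower l k p (A B : R) :
  is_lim_seq (fun n => mixed_moment l k n / INR n ^ (l + p)) A ->
  is_lim_seq (fun n => mixed_moment l (S k) n / INR n ^ (l + p)) B ->
  is_lim_seq (fun n => mixed_moment (S l) k n / INR n ^ (S l + p)) (A / 4).
Proof.
  intros HA HB.
  apply (is_lim_seq_ext_loc (fun n =>
    1/4 * (mixed_moment l k n / INR n ^ (l + p))
    + (0 + 1 / INR n) * (mixed_moment l (S k) n / INR n ^ (l + p)))).
  { exists 1%nat; intros n Hn. assert (INR n <> 0) by (apply not_0_INR; lia).
    rewrite mixed_moment_S. change (INR n ^ (S l + p)) with (INR n * INR n ^ (l + p)).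
    field. split; [apply pow_nonzero|]; auto. }
  replace (A / 4) with (1/4 * A + 0 * B) by field.
  apply is_lim_seq_plus'; apply is_lim_seq_mult';
    auto using is_lim_seq_const, is_lim_seq_const_plus_div.
Qed.

Lemma mixed_moment_S_limit_same l k p (A B : R) :
  is_lim_seq (fun n => mixed_moment l k n / INR n ^ (l + p)) A ->
  is_lim_seq (fun n => mixed_moment l (S k) n / INR n ^ (l + S p)) B ->
  is_lim_seq (fun n => mixed_moment (S l) k n / INR n ^ (S l + p)) (A / 4 + B).
Proof.
  intros HA HB.
  apply (is_lim_seq_ext_loc (fun n =>
    1/4 * (mixed_moment l k n / INR n ^ (l + p)) + mixed_moment l (S k) n / INR n ^ (l + S p))).
  { exists 1%nat; intros n Hn. assert (INR n <> 0) by (apply not_0_INR; lia).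
    rewrite mixed_moment_S. replace (l + S p)%nat with (S l + p)%nat by lia.
    change (INR n ^ (S l + p)) with (INR n * INR n ^ (l + p)).
    field. split; [apply pow_nonzero|]; auto. }
  replace (A / 4 + B) with (1/4 * A + B) by field.
  apply is_lim_seq_plus'; [apply is_lim_seq_mult'; [apply is_lim_seq_const | exact HA] | exact HB].
Qed.

Lemma mixed_moment_limit l : forall s,
  is_lim_seq (fun n => mixed_moment l (2 * s) n / INR n ^ (l + s))
    ((1/4) ^ l * moment_limit (2 * s)) /\
  is_lim_seq (fun n => mixed_moment l (S (2 * s)) n / INR n ^ (l + s))
    ((1/4) ^ l * (moment_limit (S (2 * s)) + 4 * INR l * moment_limit (2 * S s))).
Proof.
  induction l as [|l IH]; intros s.
  - simpl (0 + s)%nat. rewrite !Rmult_1_l, Rmult_0_r, Rmult_0_l, Rplus_0_r.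
    split.
    + apply (is_lim_seq_ext (fun n => central_moment n (2 * s) / INR n ^ Nat.div2 (2 * s)));
        [intros n; now rewrite mixed_moment_O, Nat.div2_double | apply central_moment_limit].
    + apply (is_lim_seq_ext (fun n => central_moment n (S (2 * s)) / INR n ^ Nat.div2 (S (2 * s))));
        [intros n; now rewrite mixed_moment_O, Nat.div2_succ_double | apply central_moment_limit].
  - destruct (IH s) as [Heven Hodd]. destruct (IH (S s)) as [Heven' _].
    split.
    + replace ((1/4) ^ S l * moment_limit (2 * s))
        with ((1/4) ^ l * moment_limit (2 * s) / 4) by (simpl pow; field).
      exact (mixed_moment_S_limit_lower _ _ _ _ _ Heven Hodd).
    + replace ((1/4) ^ S l * (moment_limit (S (2 * s)) + 4 * INR (S l) * moment_limit (2 * S s)))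
        with ((1/4) ^ l * (moment_limit (S (2 * s)) + 4 * INR l * moment_limit (2 * S s)) / 4
              + (1/4) ^ l * moment_limit (2 * S s))
        by (rewrite S_INR; simpl pow; field).
      apply (mixed_moment_S_limit_same _ _ _ _ _ Hodd).
      replace (S (S (2 * s))) with (2 * S s)%nat by lia. exact Heven'.
Qed.

Lemma dfact_pos n : (0 < dfact n)%nat.
Proof.
  induction n as [n IH] using lt_wf_ind.
  destruct n as [|[|n]]; simpl; try lia.
  specialize (IH n ltac:(lia)). lia.
Qed.

Lemma asymp_of_is_lim_seq (a b : nat -> R) (p : nat) (K : R) :
  is_lim_seq (fun n => a n / INR n ^ p) K -> K <> 0 ->
  (forall n, b n = K * INR n ^ p) -> asymp a b.
Proof.
  intros Ha HK Hb. apply is_lim_seq_Reals.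
  apply (is_lim_seq_ext_loc (fun n => a n / INR n ^ p / K)).
  - exists 1%nat; intros n Hn. rewrite Hb.
    assert (INR n ^ p <> 0) by (apply pow_nonzero, not_0_INR; lia). field. auto.
  - replace 1 with (K / K) by (field; exact HK).
    apply is_lim_seq_div'; [exact Ha | apply is_lim_seq_const | exact HK].
Qed.

Theorem lemma4 (s l : nat) :
  asymp (fun n => expect n (fun t => INR (S2 t) ^ l * (INR (S2 t) - INR n / 4) ^ (2 * s)))
        (fun n => (INR n / 4) ^ l * INR (dfact (2 * s - 1)) / 4 ^ (2 * s) * INR n ^ s)
  /\
  asymp (fun n => expect n (fun t => INR (S2 t) ^ l * (INR (S2 t) - INR n / 4) ^ (2 * s + 1)))
        (fun n => (INR n / 4) ^ l * INR (dfact (2 * s + 1)) / (2 * 4 ^ (2 * s + 1))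
                  * INR (2 * l + 1) * INR n ^ s).
Proof.
  assert (Hd : forall m, 0 < INR (dfact m)) by (intros; apply lt_0_INR, dfact_pos).
  assert (H16 : 0 < 16 ^ s) by (apply pow_lt; lra).
  assert (H4 : 0 < (1/4) ^ l) by (apply pow_lt; lra).
  assert (E16 : 4 ^ (2 * s) = 16 ^ s) by (rewrite pow_mult; f_equal; ring).
  destruct (mixed_moment_limit l s) as [Heven Hodd].
  split.
  - apply (asymp_of_is_lim_seq _ _ _ _ Heven).
    + rewrite moment_limit_double. apply Rgt_not_eq, Rmult_lt_0_compat, Rdiv_lt_0_compat; auto.
    + intros n. rewrite moment_limit_double, E16. replace (1/4) with (/4) by field.
      unfold Rdiv. rewrite Rpow_mult_distr, pow_add. field. lra.
  - replace (2 * s + 1)%nat with (S (2 * s)) by lia.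
    rewrite moment_limit_succ_double, moment_limit_double in Hodd.
    replace (2 * S s - 1)%nat with (S (2 * s)) in Hodd by lia.
    apply (asymp_of_is_lim_seq _ _ _ _ Hodd).
    + pose proof (pos_INR l). apply Rgt_not_eq, Rmult_lt_0_compat; [exact H4|].
      apply Rplus_lt_le_0_compat; [apply Rdiv_lt_0_compat; auto; lra|].
      apply Rmult_le_pos; [lra | apply Rlt_le, Rdiv_lt_0_compat; auto; simpl; lra].
    + intros n. replace (1/4) with (/4) by field.
      unfold Rdiv. rewrite Rpow_mult_distr, pow_add, plus_INR, mult_INR.
      rewrite <- (tech_pow_Rmult 4 (2 * s)), <- (tech_pow_Rmult 16 s), E16.
      simpl (INR 1). simpl (INR 2). field. lra.
Qed.
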